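(* Let $n\ge1$, $K=U(n)$ acting on $\mathcal{O}_\Lambda$ via $k\mapsto\mathrm{diag}(1,k)$, $\underline{\mu}=(\mu_1\ge\dots\ge\mu_n)$, $\mathrm{M}=\mathrm{diag}(\mu_1,\dots,\mu_n)$, and let $p=\begin{pmatrix}c&\mathbf{z}^\dagger\\ \mathbf{z}&\mathrm{M}\end{pmatrix}\in\mathcal{O}_\Lambda$ (so $\Phi(p)=\mathrm{M}$). Let $X\in\mathfrak{u}(n)$ and $\mathbf{x}\in\mathbb{C}^n$ satisfy $0=\mathbf{x}\mathbf{z}^\dagger+\mathbf{z}\mathbf{x}^\dagger+[X,\mathrm{M}]$. If $\mu\in[\underline{\mu}]$ is such that the component of the interlacing pattern of $(\underline{\lambda},\underline{\mu})$ labelled $\mu$ is not an M-shape, then $$(X\mathbf{z})_\mu=\Big(\sum_{\tau\in[\underline{\mu}],\ \text{M-shape}}\frac{r_\tau^2}{\mu-\tau}\Big)\mathbf{x}_\mu.$$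
   Context: $\mathcal{O}_\Lambda\subset\mathcal{H}_{n+1}$ is the set of $(n+1)\times(n+1)$ Hermitian matrices with eigenvalues $\lambda_1\ge\dots\ge\lambda_{n+1}$ (a fixed non-increasing real sequence $\underline{\lambda}$); $K=U(n)$ acts by conjugation by $\mathrm{diag}(1,k)$ and $\Phi(p)$ is the bottom-right $n\times n$ submatrix of $p$. For $p\in\mathcal{O}_\Lambda$ with $\Phi(p)=\mathrm{M}$ the pair $(\underline{\lambda},\underline{\mu})$ satisfies $\lambda_1\ge\mu_1\ge\lambda_2\ge\dots\ge\mu_n\ge\lambda_{n+1}$. Notation: $[\underline{\tau}]$ is the set of distinct values of a sequence, $n_v(\underline{\tau})$ the number of occurrences of $v$. For $\mu\in[\underline{\mu}]$ and $\mathbf{v}\in\mathbb{C}^n$, $\mathbf{v}_\mu\in\mathbb{C}^{n_\mu(\underline{\mu})}$ is the block of coordinates $j$ with $\mu_j=\mu$. For each value $v$ occurring in $\underline{\lambda}$ or $\underline{\mu}$, the component of the interlacing pattern labelled $v$ is an M-shape if $n_v(\underline{\mu})=n_v(\underline{\lambda})+1$, a W-shape if $n_v(\underline{\lambda})=n_v(\underline{\mu})+1$, and a parallelogram-shape if $n_v(\underline{\lambda})=n_v(\underline{\mu})$ (these are the only possibilities). For $\tau\in[\underline{\mu}]$ with M-shape component, $r_\tau>0$ is defined by $r_\tau^2=-\prod_{\lambda\in[\underline{\lambda}],\,\text{W-shape}}(\tau-\lambda)\prod_{\sigma\in[\underline{\mu}],\,\text{M-shape},\,\sigma\neq\tau}\frac{1}{\tau-\sigma}$;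 otherwise $r_\tau=0$. *)

From HB Require Import structures.
From mathcomp Require Import all_boot all_order all_algebra.
From mathcomp Require Import complex.
Set Implicit Arguments. Unset Strict Implicit. Unset Printing Implicit Defensive.
Import Order.TTheory GRing.Theory Num.Theory.
Local Open Scope ring_scope.

Definition adjmx (R : rcfType) m n (A : 'M[R[i]]_(m, n)) : 'M[R[i]]_(n, m) :=
  (map_mx (@conjc R) A)^T.

Definition nonincr (R : rcfType) k (s : 'I_k -> R) : Prop :=
  forall i j : 'I_k, (i <= j)%N -> s j <= s i.

Definition nocc (R : rcfType) k (s : 'I_k -> R) (v : R) : nat :=
  #|[pred i | s i == v]|.

Definition vals (R : rcfType) k (s : 'I_k -> R) : seq R :=
  undup [seq s i | i <- enum 'I_k].

(* shape of the component labelled v of the interlacing pattern (lam, mu) *)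
Definition Mshape (R : rcfType) n (lam : 'I_n.+1 -> R) (mu : 'I_n -> R) (v : R) : bool :=
  nocc mu v == (nocc lam v).+1.
Definition Wshape (R : rcfType) n (lam : 'I_n.+1 -> R) (mu : 'I_n -> R) (v : R) : bool :=
  nocc lam v == (nocc mu v).+1.

Definition rsq (R : rcfType) n (lam : 'I_n.+1 -> R) (mu : 'I_n -> R) (tau : R) : R :=
  - (\prod_(l <- vals lam | Wshape lam mu l) (tau - l))
    * \prod_(s <- vals mu | Mshape lam mu s && (s != tau)) (tau - s)^-1.

(* The characteristic polynomial of the arrow matrix p is the secular polynomial
   (X - c) prod_k (X - mu_k) - sum_k |z_k|^2 prod_(l <> k) (X - mu_l).  Fix a value r and let
   W(r) = sum_(mu_k = r) |z_k|^2.  Collecting the factors X - r gives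
     (X - r) char_poly p = (X - r)^(n_r(mu)) ((X - r) F_r - W(r) G_r),
   where F_r is the secular polynomial of the k with mu_k <> r and
   G_r = prod_(mu_k <> r) (X - mu_k), so G_r(r) <> 0; moreover F_r has at most a simple root at r because the weights |z_k|^2 are
   nonnegative.  Comparing multiplicities of r: if W(r) <> 0 then n_r(mu) = n_r(lam) + 1,
   an M-shape, and evaluating the cofactors at r gives W(r) = r_r^2; if W(r) = 0 then
   n_r(lam) - n_r(mu) is 0 or 1.  Hence outside the M-shapes the z-block vanishes, the
   (j, k) entry of the equation reads X_jk (mu_k - mu) = - x_j conj(z_k), and
   (X z)_j = x_j sum_k |z_k|^2 / (mu - mu_k) = x_j sum_tau W(tau) / (mu - tau). *)

From HB Require Import structures.
From mathcomp Require Import all_boot all_order all_algebra.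
From mathcomp Require Import complex.
From mathcomp Require Import ring zify.
Import Order.TTheory GRing.Theory Num.Theory.
Set Implicit Arguments. Unset Strict Implicit.
Local Open Scope ring_scope.
Local Open Scope complex_scope.

Section RootPoly.
Variables (F : fieldType) (I : finType) (s : I -> F).

Definition root_poly (P : pred I) := \prod_(i | P i) ('X - (s i)%:P).

Lemma eq_root_poly (P Q : pred I) : P =1 Q -> root_poly P = root_poly Q.
Proof. exact: eq_bigl. Qed.

Lemma root_polyD1 (P : pred I) k :
  P k -> root_poly P = ('X - (s k)%:P) * root_poly (predD1 P k).
Proof. by move=> Pk; rewrite /root_poly (bigD1 k) //; under eq_bigl do rewrite andbC. Qed.

Lemma horner_root_poly (P : pred I) r : (root_poly P).[r] = \prod_(i | P i) (r - s i).
Proof. by rewrite /root_poly horner_prod; under eq_bigr do rewrite hornerXsubC. Qed.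

Lemma root_poly_Nroot (P : pred I) r : (forall i, P i -> s i != r) -> ~~ root (root_poly P) r.
Proof.
move=> Pr; rewrite /root horner_root_poly; apply/prodf_neq0 => i Pi.
by rewrite subr_eq0 eq_sym Pr.
Qed.

Lemma root_poly_split (P : pred I) r :
  root_poly P = ('X - r%:P) ^+ #|[pred i | P i && (s i == r)]| *
                root_poly [pred i | P i && (s i != r)].
Proof.
rewrite /root_poly (bigID [pred i | s i == r]) /= -prodr_const; congr (_ * _).
by apply: eq_big => // i /andP[_ /eqP ->].
Qed.

End RootPoly.

Lemma map_root_poly (F K : fieldType) (f : {rmorphism F -> K}) (I : finType) (s : I -> F)
    (P : pred I) :
  map_poly f (root_poly s P) = root_poly (f \o s) P.
Proof. by rewrite rmorph_prod; apply: eq_bigr => i _; exact: map_polyXsubC. Qed.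

Lemma mup_XsubC_expM (F : fieldType) (r : F) k q :
  ~~ root q r -> mup r (('X - r%:P) ^+ k * q) = k.
Proof. by move=> qr; rewrite mupMl // mup_XsubCX eqxx. Qed.

Section Secular.
Variables (F : fieldType) (I : finType) (mu w : I -> F) (c : F).

Definition secular_poly (P : pred I) :=
  ('X - c%:P) * root_poly mu P - \sum_(k | P k) (w k)%:P * root_poly mu (predD1 P k).

Definition value_weight r := \sum_(k | mu k == r) w k.

Lemma secular_poly_value r (P := [pred k | mu k != r]) :
  ('X - r%:P) * secular_poly predT =
  ('X - r%:P) ^+ #|[pred k | mu k == r]| *
    (('X - r%:P) * secular_poly P - (value_weight r)%:P * root_poly mu P).
Proof.
set a := #|_|; set G := root_poly mu P.
have eG : root_poly mu predT = ('X - r%:P) ^+ a * G := root_poly_split mu predT r.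
have eOn k : mu k == r -> ('X - r%:P) * root_poly mu (predD1 predT k) = ('X - r%:P) ^+ a * G.
  by move=> /eqP rk; rewrite -{1}rk -root_polyD1.
have eOff k : mu k != r ->
    root_poly mu (predD1 predT k) = ('X - r%:P) ^+ a * root_poly mu (predD1 P k).
  move=> rk; rewrite (root_poly_split _ _ r); congr (_ ^+ _ * _).
    apply: eq_card => i; rewrite !inE andbT.
    by case: eqVneq => // ->; rewrite (negbTE rk).
  by apply: eq_root_poly => i; rewrite /= andbT.
rewrite /secular_poly eG (bigID [pred k | mu k == r]) /= mulrBr mulrDr.
have -> : ('X - r%:P) * \sum_(k | mu k == r) (w k)%:P * root_poly mu (predD1 predT k) =
          (value_weight r)%:P * (('X - r%:P) ^+ a * G).
  rewrite mulr_sumr /value_weight rmorph_sum mulr_suml; apply: eq_bigr => k rk.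
  by rewrite mulrCA eOn.
have -> : \sum_(k | mu k != r) (w k)%:P * root_poly mu (predD1 predT k) =
          ('X - r%:P) ^+ a * \sum_(k | P k) (w k)%:P * root_poly mu (predD1 P k).
  by rewrite mulr_sumr; apply: eq_bigr => k rk; rewrite eOff // mulrCA.
rewrite /G /a /P /=; ring.
Qed.

Definition secular_fun (P : pred I) r := r - c - \sum_(k | P k) w k / (r - mu k).

Definition secular_quot (P : pred I) r :=
  root_poly mu P + \sum_(k | P k) (w k / (r - mu k))%:P * root_poly mu (predD1 P k).

Section OffPoles.
Variables (P : pred I) (r : F).
Hypothesis P_neq : forall k, P k -> mu k != r.

Lemma secular_poly_decomp :
  secular_poly P = ('X - r%:P) * secular_quot P r + (secular_fun P r)%:P * root_poly mu P.
Proof.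
rewrite /secular_poly /secular_quot /secular_fun.
set a := fun k => w k / (r - mu k).
have eS : (\sum_(k | P k) a k)%:P * root_poly mu P =
          \sum_(k | P k) (a k)%:P * ('X - (mu k)%:P) * root_poly mu (predD1 P k).
  rewrite rmorph_sum mulr_suml; apply: eq_bigr => k Pk.
  by rewrite (root_polyD1 _ Pk) mulrA.
have eW : \sum_(k | P k) (w k)%:P * root_poly mu (predD1 P k) =
    \sum_(k | P k) ((a k)%:P * ('X - (mu k)%:P) * root_poly mu (predD1 P k) -
                    ('X - r%:P) * ((a k)%:P * root_poly mu (predD1 P k))).
  apply: eq_bigr => k Pk.
  have -> : w k = a k * (r - mu k) by rewrite /a divfK // subr_eq0 eq_sym P_neq.
  rewrite polyCM polyCB; ring.
rewrite eW sumrB -eS -mulr_sumr !polyCB; ring.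
Qed.

Lemma horner_secular_quot :
  (secular_quot P r).[r] = (root_poly mu P).[r] * (1 + \sum_(k | P k) w k / (r - mu k) ^+ 2).
Proof.
rewrite /secular_quot hornerD horner_sum mulrDr mulr1 mulr_sumr; congr (_ + _).
apply: eq_bigr => k Pk; rewrite hornerM hornerC (root_polyD1 _ Pk) hornerM hornerXsubC.
have rk_neq0 : r - mu k != 0 by rewrite subr_eq0 eq_sym P_neq.
by field.
Qed.

End OffPoles.
End Secular.

Lemma map_secular_poly (F K : fieldType) (f : {rmorphism F -> K}) (I : finType)
    (mu w : I -> F) c (P : pred I) :
  map_poly f (secular_poly mu w c P) = secular_poly (f \o mu) (f \o w) (f c) P.
Proof.
rewrite /secular_poly rmorphB rmorphM rmorph_sum /= map_polyXsubC map_root_poly.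
by congr (_ - _); apply: eq_bigr => k _; rewrite rmorphM /= map_polyC map_root_poly.
Qed.

Lemma det_arrow_mx (F : idomainType) n (a : F) (b : 'rV[F]_n) (cc : 'cV[F]_n) (d : 'I_n -> F) :
  \prod_k d k != 0 ->
  \det (block_mx (a%:M : 'M_1) b cc (diag_mx (\row_j d j))) =
    a * \prod_k d k - \sum_k b 0 k * cc k 0 * \prod_(l | l != k) d l.
Proof.
move=> d_neq0; set D := diag_mx _; set pd := \prod_k d k.
set E := diag_mx (\row_k \prod_(l | l != k) d l).
have ED : E *m D = pd%:M.
  apply/matrixP => i j; rewrite mul_diag_mx !mxE.
  have [->|_] := eqVneq i j; last by rewrite mulr0n mulr0.
  by rewrite !mulr1n /pd [RHS](bigD1 j) //= mulrC.
pose L := block_mx (pd%:M : 'M_1) (- (b *m E)) 0 1%:M.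
have detL : \det L = pd by rewrite det_ublock det1 mulr1 det_scalar1.
have LA : L *m block_mx a%:M b cc D = block_mx ((a * pd)%:M - b *m E *m cc) 0 cc D.
  rewrite mulmx_block !mul0mx !mul1mx !add0r !mulNmx -[b *m E *m D]mulmxA ED.
  by rewrite !mul_mx_scalar mul_scalar_mx subrr scale_scalar_mx.
have := det_mulmx L (block_mx a%:M b cc D).
rewrite LA det_lblock detL det_diag.
have -> : \prod_i (\row_j d j) 0 i = pd by apply: eq_bigr => i _; rewrite mxE.
rewrite [pd * _]mulrC => /(mulIf d_neq0) <-.
rewrite det_mx11 !mxE eqxx mulr1n; congr (_ - _); apply: eq_bigr => k _.
by rewrite mul_mx_diag !mxE mulrAC.
Qed.

Lemma char_poly_arrow (F : fieldType) n (a : F) (b : 'rV[F]_n) (cc : 'cV[F]_n)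
    (d w : 'I_n -> F) :
  (forall k, b 0 k * cc k 0 = w k) ->
  char_poly (block_mx (a%:M : 'M_1) b cc (diag_mx (\row_j d j))) = secular_poly d w a predT.
Proof.
move=> bcw; rewrite /char_poly.
have -> : char_poly_mx (block_mx (a%:M : 'M_1) b cc (diag_mx (\row_j d j))) =
    block_mx (('X - a%:P)%:M : 'M_1) (- map_mx polyC b) (- map_mx polyC cc)
             (diag_mx (\row_j ('X - (d j)%:P))).
  rewrite /char_poly_mx map_block_mx (scalar_mx_block 1 n) opp_block_mx add_block_mx.
  congr block_mx; apply/matrixP => i k; rewrite !mxE ?add0r ?sub0r //.
    by rewrite (ord1 i) (ord1 k) /= !mulr1n.
  by case: (i == k); rewrite /= ?mulr1n ?mulr0n ?polyC0 ?subr0.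
rewrite det_arrow_mx; last by apply/prodf_neq0 => k _; rewrite polyXsubC_eq0.
rewrite /secular_poly /root_poly; congr (_ * _ - _); apply: eq_bigr => k _.
rewrite !mxE mulrNN -polyCM bcw; congr (_ * _).
by apply: eq_bigl => l; rewrite /= andbT.
Qed.

Section NonnegWeights.
Variables (R : realFieldType) (I : finType) (mu w : I -> R) (c : R).
Hypothesis w_ge0 : forall k, 0 <= w k.

Lemma mup_secular_poly (P : pred I) r k : (forall i, P i -> mu i != r) ->
  (k <= mup r (('X - r%:P) ^+ k * secular_poly mu w c P) <= k.+1)%N.
Proof.
move=> P_neq; rewrite (secular_poly_decomp w c P_neq).
have [s0|s_neq0] := eqVneq (secular_fun mu w c P r) 0.
  rewrite s0 mul0r addr0 mulrA -exprSr mup_XsubC_expM ?leqnSn ?ltnSn //.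
  rewrite /root horner_secular_quot // mulf_neq0 ?root_poly_Nroot //.
  by rewrite paddr_eq0 ?oner_eq0 ?sumr_ge0 // => i _; rewrite divr_ge0 ?sqr_ge0.
rewrite mup_XsubC_expM ?leqnn ?leqnSn // /root hornerD hornerM hornerXsubC subrr.
by rewrite mul0r add0r hornerM hornerC mulf_neq0 ?root_poly_Nroot.
Qed.

End NonnegWeights.

Lemma big_filter_subseq (T : eqType) (V : Type) (idx : V) (op : Monoid.com_law idx)
    (s U : seq T) (P : pred T) (F : T -> V) :
  uniq s -> uniq U -> {subset s <= U} -> (forall v, P v -> v \in s) ->
  \big[op/idx]_(v <- s | P v) F v = \big[op/idx]_(v <- U | P v) F v.
Proof.
move=> us uU sU Ps; rewrite -big_filter -[RHS]big_filter; apply: perm_big.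
apply: uniq_perm; rewrite ?filter_uniq // => v; rewrite !mem_filter.
by case Pv: (P v) => //=; rewrite sU ?Ps.
Qed.

Lemma expr_interlace (F : fieldType) (x : F) a b : x != 0 ->
  (a <= b.+1)%N -> (b <= a.+1)%N ->
  x ^+ a = (if a == b.+1 then x else 1) * (if b == a.+1 then x^-1 else 1) * x ^+ b.
Proof.
move=> x_neq0 ab ba; case: (ltngtP a b) => [lt_ab|lt_ba|->].
- have -> : b = a.+1 by lia.
  have -> : (a == a.+2) = false by lia.
  by rewrite eqxx mul1r exprS mulrA mulVf ?mul1r.
- have -> : a = b.+1 by lia.
  have -> : (b == b.+2) = false by lia.
  by rewrite eqxx mulr1 exprS.
- have -> : (b == b.+1) = false by lia.
  by rewrite !mul1r.
Qed.

Section Values.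
Variable R : rcfType.

Lemma mem_vals k (s : 'I_k -> R) i : s i \in vals s.
Proof. by rewrite mem_undup; apply: map_f; rewrite mem_enum. Qed.

Lemma nocc_gt0_vals k (s : 'I_k -> R) v : (0 < nocc s v)%N -> v \in vals s.
Proof. by case/card_gt0P => i /eqP <-; apply: mem_vals. Qed.

Lemma big_values (V : Type) (idx : V) (op : Monoid.com_law idx) k (s : 'I_k -> R)
    (U : seq R) (F : 'I_k -> V) :
  uniq U -> (forall i, s i \in U) ->
  \big[op/idx]_i F i = \big[op/idx]_(v <- U) \big[op/idx]_(i | s i == v) F i.
Proof.
move=> uU sU; rewrite (exchange_big_dep xpredT) //=; apply: eq_bigr => i _.
rewrite (eq_bigl (pred1 (s i))); last by move=> v; rewrite /= eq_sym.
by rewrite -big_filter filter_pred1_uniq // big_seq1.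
Qed.

Lemma prod_values k (s : 'I_k -> R) (U : seq R) (P : pred R) (g : R -> R) :
  uniq U -> (forall i, s i \in U) ->
  \prod_(i | P (s i)) g (s i) = \prod_(v <- U | P v) g v ^+ nocc s v.
Proof.
move=> uU sU; rewrite big_mkcond (big_values _ _ uU sU) [RHS]big_mkcond.
apply: eq_bigr => v _; rewrite (eq_bigr (fun _ => if P v then g v else 1)).
  case: (P v); last by rewrite big1.
  by rewrite /nocc -prodr_const; apply: eq_bigl => i; rewrite inE.
by move=> i /eqP ->.
Qed.

End Values.

Section Interlacing.
Variables (R : rcfType) (n : nat) (mu w : 'I_n -> R) (c : R) (lam : 'I_n.+1 -> R).
Hypothesis w_ge0 : forall k, 0 <= w k.
Hypothesis secular_eq : secular_poly mu w c predT = root_poly lam predT.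

Local Notation W := (value_weight mu w).

Lemma secular_eq_value r (P := [pred k | mu k != r]) :
  ('X - r%:P) ^+ (nocc lam r).+1 * root_poly lam [pred i | lam i != r] =
  ('X - r%:P) ^+ nocc mu r * (('X - r%:P) * secular_poly mu w c P - (W r)%:P * root_poly mu P).
Proof. by rewrite -secular_poly_value secular_eq (root_poly_split lam predT r) mulrA -exprS. Qed.

Lemma nocc_weight_neq0 r : W r != 0 -> nocc mu r = (nocc lam r).+1.
Proof.
move=> W_neq0; have /(congr1 (mup r)) := secular_eq_value r.
rewrite !mup_XsubC_expM ?root_poly_Nroot // /root hornerD hornerN !hornerM hornerXsubC.
by rewrite subrr mul0r add0r hornerC oppr_eq0 mulf_neq0 ?root_poly_Nroot.
Qed.

Lemma cofactor_weight_neq0 r : W r != 0 ->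
  \prod_(i | lam i != r) (r - lam i) = - W r * \prod_(k | mu k != r) (r - mu k).
Proof.
move=> W_neq0; have := secular_eq_value r; rewrite (nocc_weight_neq0 W_neq0).
move=> /(mulfI (expf_neq0 _ (negbT (polyXsubC_eq0 r)))) /(congr1 (horner^~ r)) /=.
rewrite !horner_root_poly => ->.
by rewrite hornerD hornerN !hornerM hornerXsubC subrr mul0r add0r hornerC horner_root_poly mulNr.
Qed.

Lemma nocc_weight_eq0 r : W r = 0 -> (nocc mu r <= nocc lam r <= (nocc mu r).+1)%N.
Proof.
move=> W0; have /(congr1 (mup r)) := secular_eq_value r.
rewrite W0 mul0r subr0 mulrA -exprSr mup_XsubC_expM ?root_poly_Nroot // => e.
have := mup_secular_poly c w_ge0 (nocc mu r).+1 (fun i (ri : mu i != r) => ri).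
by rewrite -e !ltnS; apply.
Qed.

Lemma nocc_interlace r : (nocc lam r <= (nocc mu r).+1)%N && (nocc mu r <= (nocc lam r).+1)%N.
Proof.
have [/nocc_weight_eq0|/nocc_weight_neq0] := eqVneq (W r) 0; lia.
Qed.

Lemma weight_eq0_notMshape r : ~~ Mshape lam mu r -> W r = 0.
Proof. by apply: contraNeq => /nocc_weight_neq0; rewrite /Mshape => ->. Qed.

Lemma weight_neq0_Mshape r : Mshape lam mu r -> W r != 0.
Proof.
rewrite /Mshape => /eqP Mr; apply/eqP => /nocc_weight_eq0.
by rewrite Mr ltnn.
Qed.

Lemma weight_Mshape r : Mshape lam mu r -> W r = rsq lam mu r.
Proof.
move=> Mr; set U := undup (vals lam ++ vals mu).
have uU : uniq U := undup_uniq _.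
have lamU i : lam i \in U by rewrite mem_undup mem_cat mem_vals.
have muU i : mu i \in U by rewrite mem_undup mem_cat mem_vals orbT.
have sub_lamU : {subset vals lam <= U} by move=> v lv; rewrite mem_undup mem_cat lv.
have sub_muU : {subset vals mu <= U} by move=> v mv; rewrite mem_undup mem_cat mv orbT.
have Wr_false : Wshape lam mu r = false by move: Mr; rewrite /Mshape /Wshape; lia.
have shapes : \prod_(i | lam i != r) (r - lam i) =
    \prod_(v <- U | Wshape lam mu v) (r - v) *
    \prod_(v <- U | Mshape lam mu v && (v != r)) (r - v)^-1 *
    \prod_(k | mu k != r) (r - mu k).
  rewrite (prod_values (fun v => v != r) (fun v => r - v) uU lamU).
  rewrite (prod_values (fun v => v != r) (fun v => r - v) uU muU).
  rewrite !(big_mkcond (fun v => v != r)) (big_mkcond (Wshape lam mu)).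
  rewrite (big_mkcond (fun v => Mshape lam mu v && (v != r))) -!big_split /=.
  apply: eq_bigr => v _.
  have [->|vr] := eqVneq v r; first by rewrite Wr_false andbF !mulr1.
  rewrite andbT; case/andP: (nocc_interlace v) => le1 le2.
  by apply: expr_interlace; rewrite ?subr_eq0 1?eq_sym.
have G_neq0 : \prod_(k | mu k != r) (r - mu k) != 0.
  by apply/prodf_neq0 => k; rewrite subr_eq0 eq_sym.
apply: (mulIf G_neq0); apply: oppr_inj; rewrite -mulNr -cofactor_weight_neq0 ?weight_neq0_Mshape //.
rewrite shapes /rsq !mulNr opprK.
rewrite (big_filter_subseq _ _ (undup_uniq _) uU sub_lamU); last first.
  by move=> v /eqP Wv; apply: nocc_gt0_vals; rewrite Wv.
rewrite (big_filter_subseq _ _ (undup_uniq _) uU sub_muU) // => v /andP[/eqP Mv _].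
by apply: nocc_gt0_vals; rewrite Mv.
Qed.

Lemma sum_weight_div r :
  \sum_k w k / (r - mu k) = \sum_(v <- vals mu | Mshape lam mu v) rsq lam mu v / (r - v).
Proof.
rewrite (big_values _ _ (undup_uniq _) (mem_vals mu)) [RHS]big_mkcond.
apply: eq_bigr => v _; rewrite (eq_bigr (fun k => w k / (r - v))) => [|k /eqP -> //].
rewrite -mulr_suml -/(W v); case: (boolP (Mshape lam mu v)) => [/weight_Mshape ->//|].
by move=> /weight_eq0_notMshape ->; rewrite mul0r.
Qed.

End Interlacing.

Section ComplexMatrices.
Variable R : rcfType.
Lemma conjc_eq_real (x : R[i]) : x^* = x -> x = (complex.Re x)%:C.
Proof. by move=> xJ; rewrite ReJ_add xJ mulrDl -splitr. Qed.

Lemma mulJc (x : R[i]) : x^* * x = (complex.Re x ^+ 2 + complex.Im x ^+ 2)%:C.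
Proof. by rewrite add_Re2_Im2 sqr_normc mulrC. Qed.

Lemma Re2_Im2_eq0 (x : R[i]) : complex.Re x ^+ 2 + complex.Im x ^+ 2 = 0 -> x = 0.
Proof.
move=> /(congr1 (real_complex R)); rewrite add_Re2_Im2 rmorph0 => /eqP.
by rewrite expf_eq0 normr_eq0 => /andP[_ /eqP].
Qed.

Lemma sylvester_row n (mu : 'I_n -> R) (z x : 'cV[R[i]]_n) (X : 'M[R[i]]_n) j :
  let M := diag_mx (\row_k (mu k)%:C) in
  x *m adjmx z + z *m adjmx x + (X *m M - M *m X) = 0 ->
  (forall k, mu k = mu j -> z k 0 = 0) ->
  (X *m z) j 0 = x j 0 * \sum_k (z k 0)^* * z k 0 / (mu j - mu k)%:C.
Proof.
move=> M sylv z_eq0.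
have entry k : X j k * ((mu k)%:C - (mu j)%:C) = - (x j 0 * (z k 0)^*).
  have := congr1 (fun A : 'M[R[i]]_n => A j k) sylv.
  rewrite /M mul_mx_diag mul_diag_mx !mxE !big_ord1 !mxE (z_eq0 j) // mul0r addr0.
  by move=> /eqP; rewrite addrC addr_eq0 => /eqP <-; ring.
rewrite mxE mulr_sumr; apply: eq_bigr => k _.
(* Terms with [mu k = mu j] vanish since [z k 0 = 0], whatever the value of [_ / 0]. *)
have [mu_kj|mu_kj] := eqVneq (mu k) (mu j); first by rewrite z_eq0 // !(mulr0, mul0r).
have kj_neq0 : (mu k)%:C - (mu j)%:C != 0 :> R[i] by rewrite -rmorphB fmorph_eq0 subr_eq0.
have jk_neq0 : (mu j)%:C - (mu k)%:C != 0 :> R[i] by rewrite -rmorphB fmorph_eq0 subr_eq0 eq_sym.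
rewrite -[X j k](mulfK kj_neq0) entry rmorphB.
by field; rewrite kj_neq0 jk_neq0.
Qed.

End ComplexMatrices.

Unset Implicit Arguments.

Theorem lemma4p4 (R : rcfType) (n : nat) (lam : 'I_n.+1 -> R) (mu : 'I_n -> R)
    (c : R[i]) (z : 'cV[R[i]]_n) (X : 'M[R[i]]_n) (x : 'cV[R[i]]_n) (m : R) :
  (0 < n)%N ->
  nonincr lam -> nonincr mu ->
  let M : 'M[R[i]]_n := diag_mx (\row_j (mu j)%:C) in
  let p : 'M[R[i]]_(1 + n) := block_mx c%:M (adjmx z) z M in
  adjmx p = p ->
  char_poly p = \prod_(i < n.+1) ('X - ((lam i)%:C)%:P) ->
  adjmx X = - X ->
  x *m adjmx z + z *m adjmx x + (X *m M - M *m X) = 0 ->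
  m \in vals mu ->
  ~~ Mshape lam mu m ->
  forall j : 'I_n, mu j = m ->
    (X *m z) j 0 =
      (\sum_(t <- vals mu | Mshape lam mu t) (rsq lam mu t / (m - t))%:C) * x j 0.
Proof.
move=> _ _ _ M p p_herm char_p _ sylv _ m_notM j mu_j.
have [c' c_real] : exists c' : R, c = c'%:C.
  exists (complex.Re c); apply: conjc_eq_real.
  have := congr1 (fun A : 'M[R[i]]_(1 + n) => A (lshift n 0) (lshift n 0)) p_herm.
  by rewrite /adjmx /p map_block_mx tr_block_mx !block_mxEul !mxE /= !mulr1n.
pose w k := complex.Re (z k 0) ^+ 2 + complex.Im (z k 0) ^+ 2.
have w_ge0 k : 0 <= w k by rewrite addr_ge0 ?sqr_ge0.
have secular_eq : secular_poly mu w c' predT = root_poly lam predT.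
  apply: (map_poly_inj (real_complex R)); rewrite map_secular_poly map_root_poly.
  transitivity (char_poly p); last exact: char_p.
  by rewrite /p c_real; symmetry; apply: char_poly_arrow => k; rewrite !mxE mulJc.
have z_eq0 k : mu k = m -> z k 0 = 0.
  have w_eq0 := psumr_eq0P (fun i _ => w_ge0 i) (weight_eq0_notMshape secular_eq m_notM).
  by move=> mu_k; apply: Re2_Im2_eq0; apply: w_eq0; rewrite mu_k.
rewrite (sylvester_row sylv) => [|k]; last by rewrite mu_j; apply: z_eq0.
rewrite mulrC mu_j -rmorph_sum -(sum_weight_div w_ge0 secular_eq) rmorph_sum.
by congr (_ * _); apply: eq_bigr => k _; rewrite mulJc fmorph_div.
Qed.
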